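(* Let $G$ be a connected graph with $n$ vertices. For any $i\in V(G)$, \[ nKf_i(G)-Kf(G)\leq\frac{n-1}{\alpha_i(G)}. \]
   Context: $G$ is a finite simple graph with vertex set $[n]$ and Laplacian matrix $\mathcal{L}_G=D-A$. For a vertex $i$, $\alpha_i(G)=\min\{\mathbf{x}^\top\mathcal{L}_G\mathbf{x} : \mathbf{x}\in\mathbb{R}^n_+,\ \sum_j x_j^2=1,\ x_i=0\}$ (the inverse Perron value of $i$); for connected $G$ this equals the smallest eigenvalue of the principal submatrix $\mathcal{L}_G(i)$ obtained by deleting row and column $i$. The resistance distance $r_{ij}(G)$ is the effective resistance between $i$ and $j$ when every edge is a unit resistor. The resistance centrality of $i$ is $Kf_i(G)=\sum_{j\in V(G)}r_{ij}(G)$ and the Kirchhoff index is $Kf(G)=\sum_{\{i,j\}\subseteq V(G)}r_{ij}(G)$ (sum over unordered pairs). *)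

From HB Require Import structures.
From mathcomp Require Import all_boot all_order all_algebra.
From mathcomp Require Import classical_sets reals.
Set Implicit Arguments. Unset Strict Implicit. Unset Printing Implicit Defensive.
Import Order.TTheory GRing.Theory Num.Theory.
Local Open Scope ring_scope.
Local Open Scope classical_set_scope.

(* A finite simple graph on vertex set 'I_n (= [n]) is given by an adjacency
   relation [e], assumed symmetric and irreflexive (hypotheses of the theorem). *)

Section Graph.
Variables (R : realType) (n : nat) (e : rel 'I_n).

Definition deg (k : 'I_n) : nat := #|[set j | e k j]|.

Definition laplacian : 'M[R]_n :=
  \matrix_(a, b) ((if a == b then (deg a)%:R else 0) - (e a b)%:R).

Definition qform (x : 'cV[R]_n) : R := (x^T *m laplacian *m x) 0 0.

(* inverse Perron value alpha_i(G) = min { x^T L x : x >= 0, sum x_j^2 = 1, x_i = 0 }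
   (rendered as the infimum of that set, which is attained when it is nonempty) *)
Definition alpha (i : 'I_n) : R :=
  inf [set qform x | x in [set x : 'cV[R]_n |
        (forall j, 0 <= x j 0) /\ \sum_j (x j 0) ^+ 2 = 1 /\ x i 0 = 0]].

(* Electrical network with unit resistors: v is a vector of node potentials
   realizing a unit current entering at i and leaving at j (Kirchhoff's current
   law + Ohm's law: L v = e_i - e_j). *)
Definition unit_current_potential (i j : 'I_n) (v : 'cV[R]_n) : Prop :=
  forall k, (laplacian *m v) k 0 = (k == i)%:R - (k == j)%:R.

(* resistance distance r_ij = v_i - v_j for such a potential
   (well defined for a connected graph) *)
Definition resistance (i j : 'I_n) : R :=
  xget 0 [set r | exists v, unit_current_potential i j v /\ r = v i 0 - v j 0].

Definition Kf_vertex (i : 'I_n) : R := \sum_j resistance i j.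

Definition Kf : R := \sum_(i < n) \sum_(j < n | (i < j)%N) resistance i j.

End Graph.

From HB Require Import structures.
From mathcomp Require Import all_boot all_order all_algebra.
From mathcomp Require Import classical_sets reals boolp.
From mathcomp Require Import ring lra.
Set Implicit Arguments. Unset Strict Implicit. Unset Printing Implicit Defensive.
Import Order.TTheory GRing.Theory Num.Theory.
Local Open Scope ring_scope.

(* Ground the network at i.  The potentials u_j with L u_j = e_j - e_i and
   u_j(i) = 0 are the columns of L(i)^-1 (extended by 0 at i), and
   r_jk = u_jj + u_kk - 2 u_jk.  Hence n Kf_i - Kf = sum_(j,k) u_jk = sum_m w_m
   for w = sum_j u_j, which solves L w = 1 off i and vanishes at i.  By the
   minimum principle w >= 0, so w / |w| is admissible for alpha_i and
   alpha_i |w|^2 <= w^T L w = sum_m w_m, while Cauchy-Schwarz over the n - 1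
   vertices other than i gives (sum_m w_m)^2 <= (n - 1) |w|^2.  Together they
   give alpha_i * sum_m w_m <= n - 1. *)

Lemma sumr_delta (R : pzSemiRingType) (I : finType) (a : I -> R) (k : I) :
  \sum_m a m * (m == k)%:R = a k.
Proof. by rewrite (bigD1 k) //= eqxx mulr1 big1 ?addr0 // => m /negbTE ->; rewrite mulr0. Qed.

Lemma sumr_delta1 (R : pzSemiRingType) (I : finType) (k : I) :
  \sum_m (m == k)%:R = 1 :> R.
Proof. by rewrite (eq_bigr (fun m => 1 * (m == k)%:R)) ?sumr_delta // => m _; rewrite mul1r. Qed.

Lemma cauchy_schwarz_sum (R : realDomainType) (I : finType) (a b : I -> R) :
  (\sum_k a k * b k) ^+ 2 <= (\sum_k a k ^+ 2) * (\sum_k b k ^+ 2).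
Proof.
have lagrange : \sum_k \sum_l (a k * b l - a l * b k) ^+ 2 =
    2 * ((\sum_k a k ^+ 2) * (\sum_k b k ^+ 2) - (\sum_k a k * b k) ^+ 2).
  rewrite mulrBr mulr2n !mulrDl !mul1r {1}mulrC !mulr_suml expr2 mulr_suml.
  rewrite -!big_split -sumrB /=; apply: eq_bigr => k _.
  rewrite !mulr_sumr -!big_split -sumrB /=; apply: eq_bigr => l _; ring.
have : 0 <= 2 * ((\sum_k a k ^+ 2) * (\sum_k b k ^+ 2) - (\sum_k a k * b k) ^+ 2).
  by rewrite -lagrange; do 2!apply: sumr_ge0 => ? _; apply: sqr_ge0.
by rewrite pmulr_rge0 // subr_ge0.
Qed.

Lemma double_sum_sym (R : nmodType) (n : nat) (f : 'I_n -> 'I_n -> R) :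
  (forall j k, f j k = f k j) -> (forall j, f j j = 0) ->
  \sum_j \sum_k f j k = (\sum_(j < n) \sum_(k < n | (j < k)%N) f j k) *+ 2.
Proof.
move=> fC f0.
have split_row j : \sum_k f j k =
    \sum_(k < n | (j < k)%N) f j k + \sum_(k < n | (k < j)%N) f j k.
  rewrite (bigID (fun k : 'I_n => (j < k)%N)) /=; congr (_ + _).
  rewrite (bigD1 j) /=; last by rewrite ltnn.
  rewrite f0 add0r; apply: eq_bigl => k.
  by rewrite -leqNgt ltn_neqAle andbC.
have lower : \sum_(j < n) \sum_(k < n | (k < j)%N) f j k =
    \sum_(j < n) \sum_(k < n | (j < k)%N) f j k.
  under eq_bigr do rewrite big_mkcond.
  rewrite exchange_big; apply: eq_bigr => j _; rewrite [RHS]big_mkcond.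
  by apply: eq_bigr => k _; rewrite fC.
by rewrite (eq_bigr _ (fun j _ => split_row j)) big_split /= lower.
Qed.

Section DirichletForm.
Variables (R : realDomainType) (n : nat) (e : rel 'I_n).

Definition lapf (b : 'I_n -> R) (k : 'I_n) : R := \sum_l (e k l)%:R * (b k - b l).

Definition dirichlet (a b : 'I_n -> R) : R := \sum_m a m * lapf b m.

Lemma lapfB f g k : lapf (fun l => f l - g l) k = lapf f k - lapf g k.
Proof. by rewrite /lapf -sumrB; apply: eq_bigr => l _; ring. Qed.

Lemma lapf_sum (I : finType) (f : I -> 'I_n -> R) k :
  lapf (fun m => \sum_j f j m) k = \sum_j lapf (f j) k.
Proof. by rewrite /lapf exchange_big; apply: eq_bigr => l _; rewrite -sumrB mulr_sumr. Qed.

Lemma dirichletZ c a :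
  dirichlet (fun m => c * a m) (fun m => c * a m) = c ^+ 2 * dirichlet a a.
Proof.
rewrite /dirichlet /lapf mulr_sumr; apply: eq_bigr => m _.
by rewrite !mulr_sumr; apply: eq_bigr => l _; ring.
Qed.

Lemma minimum_principle f i :
  (forall m, m != i -> 0 < lapf f m) -> forall m, f i <= f m.
Proof.
move=> lapf_gt0 m; have [k _ k_min] := arg_minP f (P := xpredT) (i0 := i) isT.
have [<- | ki] := eqVneq k i; first exact: k_min.
suff : lapf f k <= 0 by rewrite leNgt lapf_gt0.
apply: sumr_le0 => l _; apply: mulr_ge0_le0; first exact: ler0n.
by rewrite subr_le0 k_min.
Qed.

Hypothesis e_sym : symmetric e.

Lemma sum_lapf b : \sum_k lapf b k = 0.
Proof.
have antisym : \sum_k lapf b k = - \sum_k lapf b k.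
  rewrite /lapf [LHS]exchange_big -sumrN; apply: eq_bigr => k _.
  by rewrite -sumrN; apply: eq_bigr => l _; rewrite e_sym; ring.
by move: antisym; lra.
Qed.

Lemma lapf_eq_off i f b : \sum_k b k = 0 ->
  (forall k, k != i -> lapf f k = b k) -> forall k, lapf f k = b k.
Proof.
move=> sum_b0 off_i k; have [->|] := eqVneq k i; last exact: off_i.
have : \sum_k lapf f k = \sum_k b k by rewrite sum_lapf sum_b0.
by rewrite (bigD1 i) // [RHS](bigD1 i) //= (eq_bigr b) // => /addIr.
Qed.

Lemma dirichletC a b : dirichlet a b = dirichlet b a.
Proof.
have expand x y : dirichlet x y =
    \sum_m \sum_l (e m l)%:R * (x m * y m) - \sum_m \sum_l (e m l)%:R * (x m * y l).
  rewrite -sumrB; apply: eq_bigr => m _.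
  by rewrite mulr_sumr -sumrB; apply: eq_bigr => l _; ring.
rewrite !expand; congr (_ - _).
  by apply: eq_bigr => m _; apply: eq_bigr => l _; rewrite [a m * _]mulrC.
by rewrite exchange_big; apply: eq_bigr => m _; apply: eq_bigr => l _; rewrite e_sym [a _ * _]mulrC.
Qed.

Lemma dirichlet_sqr a :
  dirichlet a a *+ 2 = \sum_m \sum_l (e m l)%:R * (a m - a l) ^+ 2.
Proof.
have flip : dirichlet a a = \sum_m \sum_l (e m l)%:R * (a l * (a l - a m)).
  rewrite /dirichlet /lapf exchange_big; apply: eq_bigr => m _.
  by rewrite mulr_sumr; apply: eq_bigr => l _; rewrite e_sym; ring.
rewrite mulr2n {2}flip /dirichlet /lapf -big_split; apply: eq_bigr => m _ /=.
by rewrite mulr_sumr -big_split; apply: eq_bigr => l _ /=; ring.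
Qed.

Lemma dirichlet_ge0 a : 0 <= dirichlet a a.
Proof.
rewrite -(pmulrn_lge0 _ (isT : (0 < 2)%N)) dirichlet_sqr.
by do 2!apply: sumr_ge0 => ? _; rewrite mulr_ge0 ?ler0n ?sqr_ge0.
Qed.

Lemma dirichlet_scale_sub c a b :
  dirichlet (fun m => c * a m - b m) (fun m => c * a m - b m) =
  c ^+ 2 * dirichlet a a - 2 * c * dirichlet a b + dirichlet b b.
Proof.
have -> : 2 * c * dirichlet a b = c * dirichlet a b + c * dirichlet b a.
  by rewrite (dirichletC b a); ring.
rewrite /dirichlet /lapf !mulr_sumr -big_split -sumrB -big_split /=.
apply: eq_bigr => m _.
by rewrite !mulr_sumr -big_split -sumrB -big_split /=; apply: eq_bigr => l _; ring.
Qed.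

Hypothesis e_conn : forall j k : 'I_n, connect e j k.

Lemma lapf_eq0_const a : (forall m, lapf a m = 0) -> forall j k, a j = a k.
Proof.
move=> lapf0.
have energy0 : \sum_m \sum_l (e m l)%:R * (a m - a l) ^+ 2 = 0.
  by rewrite -dirichlet_sqr /dirichlet big1 ?mul0rn // => m _; rewrite lapf0 mulr0.
have term_ge0 m l : 0 <= (e m l)%:R * (a m - a l) ^+ 2.
  by rewrite mulr_ge0 ?ler0n ?sqr_ge0.
have edge_eq m l : e m l -> a m = a l.
  move=> eml; have row0 : \sum_l (e m l)%:R * (a m - a l) ^+ 2 = 0.
    apply: (psumr_eq0P _ energy0) => // m' _.
    by apply: sumr_ge0 => l' _; exact: term_ge0.
  have : (e m l)%:R * (a m - a l) ^+ 2 = 0.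
    by apply: (psumr_eq0P _ row0) => // l' _; exact: term_ge0.
  by rewrite eml mul1r => /eqP; rewrite sqrf_eq0 subr_eq0 => /eqP.
move=> j k; have /connectP [p path_p ->] := e_conn j k.
elim: p j path_p => [|l p IHp] j //= /andP [ejl path_p].
by rewrite (edge_eq _ _ ejl) IHp.
Qed.

End DirichletForm.

Section LaplacianMatrix.
Variables (R : realType) (n : nat) (e : rel 'I_n).

Lemma laplacianE (v : 'cV[R]_n) k :
  (laplacian R e *m v) k 0 = lapf e (fun l => v l 0) k.
Proof.
have degE : (deg e k)%:R = \sum_l (e k l)%:R :> R.
  rewrite /deg -sum1_card natr_sum big_mkcond /=; apply: eq_bigr => l _.
  rewrite (_ : _ \in _ = e k l); last by apply/idP/idP; rewrite in_setE.
  by case: (e k l).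
rewrite mxE (eq_bigr (fun l => (k == l)%:R * (deg e k)%:R * v l 0 - (e k l)%:R * v l 0)).
  rewrite sumrB (bigD1 k) //= eqxx mul1r big1 ?addr0 => [|l /negbTE]; last first.
    by rewrite eq_sym => ->; rewrite !mul0r.
  by rewrite degE mulr_suml -sumrB; apply: eq_bigr => l _; ring.
by move=> l _; rewrite !mxE mulrBl; case: eqP => [->|]; rewrite ?mul1r ?mul0r.
Qed.

Lemma qformE (x : 'cV[R]_n) :
  qform e x = dirichlet e (fun m => x m 0) (fun m => x m 0).
Proof. by rewrite /qform -mulmxA mxE; apply: eq_bigr => m _; rewrite laplacianE mxE. Qed.

Hypothesis e_sym : symmetric e.
Hypothesis e_conn : forall j k : 'I_n, connect e j k.

Definition grounded_laplacian (i : 'I_n) : 'M[R]_n :=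
  \matrix_(k, l) if k == i then (l == i)%:R else laplacian R e k l.

Lemma grounded_laplacianE i (x : 'cV[R]_n) k :
  (grounded_laplacian i *m x) k 0 =
  if k == i then x i 0 else lapf e (fun l => x l 0) k.
Proof.
rewrite -laplacianE !mxE; case: eqVneq => [->|ki].
  rewrite (bigD1 i) //= mxE !eqxx mul1r big1 ?addr0 // => l li.
  by rewrite mxE eqxx (negbTE li) mul0r.
by apply: eq_bigr => l _; rewrite mxE (negbTE ki).
Qed.

Lemma grounded_laplacian_unit i : grounded_laplacian i \in unitmx.
Proof.
rewrite -unitmx_tr -row_free_unit; apply/inj_row_free => v vL0.
have Lv0 k : (grounded_laplacian i *m v^T) k 0 = 0.
  have -> : grounded_laplacian i *m v^T = (v *m (grounded_laplacian i)^T)^T.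
    by rewrite trmx_mul trmxK.
  by rewrite vL0 !mxE.
pose x l := v^T l 0.
have x_i : x i = 0 by have := Lv0 i; rewrite grounded_laplacianE eqxx.
have lapf_x : forall k, lapf e x k = 0.
  apply: (lapf_eq_off e_sym (i := i) (b := fun=> 0)); first exact: big1.
  by move=> k /negbTE ki; have := Lv0 k; rewrite grounded_laplacianE ki.
apply/rowP => l; have := lapf_eq0_const e_sym e_conn lapf_x l i.
by rewrite x_i /x !mxE.
Qed.

Lemma lapf_solvable (i : 'I_n) (b : 'I_n -> R) : \sum_k b k = 0 ->
  exists x : 'I_n -> R, x i = 0 /\ forall k, lapf e x k = b k.
Proof.
move=> sum_b0; pose b' : 'cV[R]_n := \col_k (if k == i then 0 else b k).
pose x := invmx (grounded_laplacian i) *m b'.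
have Lx k : (grounded_laplacian i *m x) k 0 = b' k 0.
  by rewrite mulKVmx // grounded_laplacian_unit.
exists (fun l => x l 0); split.
  by have := Lx i; rewrite grounded_laplacianE !mxE !eqxx.
apply: (lapf_eq_off e_sym (i := i)) => // k /negbTE ki.
by have := Lx k; rewrite grounded_laplacianE !mxE ki.
Qed.

Lemma resistance_eq j k (f : 'I_n -> R) :
  (forall m, lapf e f m = (m == j)%:R - (m == k)%:R) ->
  resistance R e j k = f j - f k.
Proof.
move=> lapf_f; apply: xget_unique.
  exists (\col_m f m); split; last by rewrite !mxE.
  by move=> m; rewrite laplacianE -lapf_f; congr lapf; apply/funext => l; rewrite mxE.
move=> _ [v [v_pot ->]].
have lapf_diff m : lapf e (fun l => v l 0 - f l) m = 0.
  by rewrite lapfB lapf_f -laplacianE v_pot subrr.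
by have := lapf_eq0_const e_sym e_conn lapf_diff j k; lra.
Qed.

Lemma green_exists i : exists u : 'I_n -> 'I_n -> R,
  (forall j, u j i = 0) /\ forall j m, lapf e (u j) m = (m == j)%:R - (m == i)%:R.
Proof.
have sum_b j : \sum_m ((m == j)%:R - (m == i)%:R) = 0 :> R.
  by rewrite sumrB !sumr_delta1 subrr.
have [u u_sol] := choice (fun j => lapf_solvable i (sum_b j)).
by exists u; split => j; case: (u_sol j).
Qed.

Definition perron_domain (i : 'I_n) : set 'cV[R]_n :=
  [set x : 'cV[R]_n | (forall j, 0 <= x j 0) /\ \sum_j x j 0 ^+ 2 = 1 /\ x i 0 = 0]%classic.

Lemma alphaE i : alpha R e i = inf [set qform e x | x in perron_domain i]%classic.
Proof. by []. Qed.

Lemma qform_ge0 (x : 'cV[R]_n) : 0 <= qform e x.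
Proof. by rewrite qformE dirichlet_ge0. Qed.

Lemma alpha_ge0 i : 0 <= alpha R e i.
Proof.
rewrite alphaE; set S := (X in inf X).
have [[y Sy] | no_y] := pselect (exists y, S y).
  by apply: lb_le_inf => [|_ [x _ <-]]; [exists y | exact: qform_ge0].
suff -> : S = set0 by rewrite inf0.
by apply/seteqP; split => // y Sy; apply: no_y; exists y.
Qed.

Lemma alpha_le_qform i x : perron_domain i x -> alpha R e i <= qform e x.
Proof.
move=> domx; rewrite alphaE; apply: ge_inf; last by exists x.
by exists 0 => _ [y _ <-]; exact: qform_ge0.
Qed.

Section Normalization.
Variables (i : 'I_n) (w : 'I_n -> R).
Hypotheses (w_ge0 : forall m, 0 <= w m) (w_i : w i = 0).
Hypothesis sumsq_gt0 : 0 < \sum_m w m ^+ 2.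

Let normalized : 'cV[R]_n := \col_m ((Num.sqrt (\sum_m w m ^+ 2))^-1 * w m).

Lemma perron_domain_normalized : perron_domain i normalized.
Proof.
split; [|split].
- by move=> j; rewrite mxE mulr_ge0 ?invr_ge0 ?sqrtr_ge0.
- rewrite (eq_bigr (fun m => (\sum_m w m ^+ 2)^-1 * w m ^+ 2)) => [|m _].
    by rewrite -mulr_sumr mulVf // gt_eqF.
  by rewrite mxE exprMn exprVn (sqr_sqrtr (ltW sumsq_gt0)).
- by rewrite mxE w_i mulr0.
Qed.

Lemma alpha_le_rayleigh :
  alpha R e i * \sum_m w m ^+ 2 <= dirichlet e w w.
Proof.
rewrite -ler_pdivlMr //; have := alpha_le_qform perron_domain_normalized.
rewrite qformE (_ : (fun m => _) = fun m => (Num.sqrt (\sum_m w m ^+ 2))^-1 * w m).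
  by rewrite dirichletZ exprVn (sqr_sqrtr (ltW sumsq_gt0)) mulrC.
by apply/funext => m; rewrite mxE.
Qed.

End Normalization.

End LaplacianMatrix.

Section GreenFunction.
Variables (R : realType) (n : nat) (e : rel 'I_n).
Hypothesis e_sym : symmetric e.
Hypothesis e_conn : forall j k : 'I_n, connect e j k.
Variables (i : 'I_n) (u : 'I_n -> 'I_n -> R).
Hypothesis green_ground : forall j, u j i = 0.
Hypothesis lapf_green : forall j m, lapf e (u j) m = (m == j)%:R - (m == i)%:R.

Lemma dirichlet_green a j : dirichlet e a (u j) = a j - a i.
Proof.
rewrite /dirichlet (eq_bigr (fun m => a m * (m == j)%:R - a m * (m == i)%:R)).
  by rewrite sumrB !sumr_delta.
by move=> m _; rewrite lapf_green mulrBr.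
Qed.

Lemma green_sym j k : u j k = u k j.
Proof.
by have := dirichlet_green (u j) k; rewrite dirichletC // dirichlet_green !green_ground !subr0.
Qed.

Lemma green_diag_ge0 j : 0 <= u j j.
Proof. by have := dirichlet_ge0 e_sym (u j); rewrite dirichlet_green green_ground subr0. Qed.

Lemma resistance_green j k : resistance R e j k = u j j + u k k - 2 * u j k.
Proof.
rewrite (resistance_eq e_sym e_conn (f := fun l => u j l - u k l)).
  by rewrite (green_sym k j); ring.
by move=> m; rewrite lapfB !lapf_green; ring.
Qed.

Lemma Kf_vertex_green : Kf_vertex R e i = \sum_j u j j.
Proof.
apply: eq_bigr => j _.
by rewrite resistance_green green_ground (green_sym i) green_ground; ring.
Qed.

Definition green_sum m := \sum_j u j m.

Lemma Kf_green : Kf R e = n%:R * \sum_j u j j - \sum_m green_sum m.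
Proof.
have row j : \sum_k resistance R e j k =
    n%:R * u j j + \sum_k u k k - 2 * \sum_k u j k.
  rewrite (eq_bigr _ (fun k _ => resistance_green j k)) sumrB big_split /=.
  by rewrite sumr_const card_ord mulr_natl mulr_sumr.
have double : \sum_j \sum_k resistance R e j k =
    (n%:R * \sum_j u j j - \sum_m green_sum m) *+ 2.
  rewrite (eq_bigr _ (fun j _ => row j)) sumrB big_split /= sumr_const card_ord.
  rewrite /green_sum exchange_big -!mulr_sumr; ring.
have res_sym j k : resistance R e j k = resistance R e k j.
  by rewrite !resistance_green (green_sym j k); ring.
have res_diag j : resistance R e j j = 0 by rewrite resistance_green; ring.
apply/eqP; rewrite -(eqr_pMn2r (isT : (0 < 2)%N)) -double.
by rewrite (double_sum_sym res_sym res_diag).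
Qed.

Lemma green_sum_ground : green_sum i = 0.
Proof. exact: big1. Qed.

Lemma lapf_green_sum m : lapf e green_sum m = 1 - n%:R * (m == i)%:R.
Proof.
rewrite /green_sum lapf_sum (eq_bigr _ (fun j _ => lapf_green j m)) sumrB.
rewrite sumr_const card_ord mulr_natl (eq_bigr (fun j => (j == m)%:R)) ?sumr_delta1 //.
by move=> j _; rewrite eq_sym.
Qed.

Lemma green_sum_ge0 m : 0 <= green_sum m.
Proof.
rewrite -green_sum_ground; apply: (minimum_principle (e := e)) => k /negbTE ki.
by rewrite lapf_green_sum ki mulr0 subr0.
Qed.

Lemma sum_green_sum_off (c : 'I_n -> R) : (forall m, m != i -> c m = 1) ->
  \sum_m c m * green_sum m = \sum_m green_sum m.
Proof.
move=> c1; apply: eq_bigr => m _; case: (eqVneq m i) => [->|/c1 ->].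
  by rewrite green_sum_ground mulr0.
by rewrite mul1r.
Qed.

Lemma dirichlet_green_sum : dirichlet e green_sum green_sum = \sum_m green_sum m.
Proof.
rewrite /dirichlet -(sum_green_sum_off (c := lapf e green_sum)).
  by apply: eq_bigr => m _; rewrite mulrC.
by move=> m /negbTE mi; rewrite lapf_green_sum mi mulr0 subr0.
Qed.

Lemma sum_green_sum_sqr :
  (\sum_m green_sum m) ^+ 2 <= (n%:R - 1) * \sum_m green_sum m ^+ 2.
Proof.
have := cauchy_schwarz_sum (fun m => 1 - (m == i)%:R) green_sum.
rewrite sum_green_sum_off => [|m /negbTE ->]; last by rewrite subr0.
suff -> : \sum_m (1 - (m == i)%:R) ^+ 2 = n%:R - 1 :> R by [].
rewrite (eq_bigr (fun m => 1 - (m == i)%:R)) => [|m _]; last first.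
  by case: (m == i); rewrite ?subrr ?subr0 ?expr0n ?expr1n.
by rewrite sumrB sumr_const card_ord sumr_delta1.
Qed.

(* Sum over j of 0 <= dirichlet (s x_j x - u_j), using dirichlet x u_j = x_j. *)
Lemma dirichlet_green_lb (x : 'I_n -> R) s : x i = 0 ->
  2 * s * \sum_j x j ^+ 2 <=
  s ^+ 2 * dirichlet e x x * \sum_j x j ^+ 2 + \sum_j u j j.
Proof.
move=> x_i; set q := dirichlet e x x.
have term j : 0 <= s ^+ 2 * q * x j ^+ 2 - 2 * s * x j ^+ 2 + u j j.
  have := dirichlet_ge0 e_sym (fun m => s * x j * x m - u j m).
  rewrite dirichlet_scale_sub // !dirichlet_green green_ground x_i !subr0.
  by rewrite /q; lra.
have : 0 <= \sum_j (s ^+ 2 * q * x j ^+ 2 - 2 * s * x j ^+ 2 + u j j).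
  by apply: sumr_ge0 => j _; exact: term.
by rewrite big_split sumrB /= -!mulr_sumr; lra.
Qed.

Lemma alpha_gt0 : (exists x : 'cV[R]_n, perron_domain i x) -> 0 < alpha R e i.
Proof.
move=> [x0 dom_x0]; set T := \sum_j u j j.
have T_ge0 : 0 <= T by apply: sumr_ge0 => j _; exact: green_diag_ge0.
apply: (@lt_le_trans _ _ ((T + 2) / (T + 1) ^+ 2)).
  by rewrite divr_gt0 ?exprn_gt0 //; lra.
rewrite alphaE; apply: lb_le_inf; first by exists (qform e x0), x0.
move=> _ [x [_ [norm1 x_i]] <-]; rewrite qformE ler_pdivrMr ?exprn_gt0 //; last lra.
by have := dirichlet_green_lb (x := fun m => x m 0) (T + 1) x_i; rewrite norm1 !mulr1 -/T; lra.
Qed.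

Lemma sum_green_sum_le : \sum_m green_sum m <= (n%:R - 1) / alpha R e i.
Proof.
set Q := \sum_m green_sum m; set N := \sum_m green_sum m ^+ 2.
have n1_ge0 : 0 <= n%:R - 1 :> R.
  by rewrite subr_ge0 ler1n (leq_ltn_trans (leq0n i) (ltn_ord i)).
have N_ge0 : 0 <= N by apply: sumr_ge0 => m _; exact: sqr_ge0.
have [N0 | N_neq0] := eqVneq N 0.
  have w0 m : green_sum m = 0.
    apply/eqP; rewrite -sqrf_eq0; apply/eqP.
    by apply: (psumr_eq0P _ N0) => // m' _; exact: sqr_ge0.
  by rewrite /Q big1 // divr_ge0 ?alpha_ge0.
have N_gt0 : 0 < N by rewrite lt_def N_neq0.
have alpha_pos : 0 < alpha R e i.
  apply: alpha_gt0; eexists.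
  exact: (perron_domain_normalized green_sum_ge0 green_sum_ground N_gt0).
have alphaN : alpha R e i * N <= Q.
  rewrite /Q -dirichlet_green_sum.
  exact: (alpha_le_rayleigh e_sym green_sum_ge0 green_sum_ground N_gt0).
have Q_gt0 : 0 < Q by apply: lt_le_trans alphaN; exact: mulr_gt0.
have := ler_wpM2l (ltW alpha_pos) sum_green_sum_sqr.
have := ler_wpM2l n1_ge0 alphaN.
rewrite -/Q -/N => scaled_rayleigh scaled_cs.
by rewrite ler_pdivlMr // -(ler_pM2l Q_gt0); lra.
Qed.

End GreenFunction.

Theorem theorem4p2 (R : realType) (n : nat) (e : rel 'I_n)
    (e_sym : symmetric e) (e_irr : irreflexive e)
    (e_conn : forall j k : 'I_n, connect e j k) (i : 'I_n) :
  n%:R * Kf_vertex R e i - Kf R e <= (n%:R - 1) / alpha R e i.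
Proof.
have [u [u_ground lapf_u]] := green_exists R e_sym e_conn i.
rewrite (Kf_vertex_green e_sym e_conn u_ground lapf_u).
rewrite (Kf_green e_sym e_conn u_ground lapf_u) opprB addrC subrK.
exact: sum_green_sum_le.
Qed.
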